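(* Let $0<q<1$ and let $T$ be an optimal tree for $\mathrm{TDGD}(q)$. For every $s\ge 0$, the leaves of $T$ corresponding to symbols of signature $s$ all lie at depths $d$ with $d\in\{d_0,d_0+1\}$ for some $d_0$; i.e., they occupy at most two consecutive levels of $T$.
   Context: $\mathcal{A}=\{(i,j): i,j\in\mathbb{Z}_{\ge 0}\}$; $\mathrm{TDGD}(q)$ is the distribution $P(i,j)=(1-q)^2q^{i+j}$ on $\mathcal{A}$. A prefix code for $\mathcal{A}$ is a full binary tree whose leaves are in bijection with $\mathcal{A}$; codeword length = depth of leaf; a tree is optimal for $\mathrm{TDGD}(q)$ if it minimizes expected codeword length. The signature of $(i,j)$ is $s=i+j$; a level of a tree is the set of nodes at a given depth. *)

From Stdlib Require Import Reals List.
Import ListNotations.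
Open Scope R_scope.

(* A symbol of the alphabet A = Z_{>=0} x Z_{>=0} is a pair (i,j) of nats.
   A prefix code for A is represented by its codeword map
   c : nat -> nat -> list bool; the code tree is the set of all prefixes of
   codewords, its leaves are the codewords, and the depth of the leaf of
   (i,j) is the length of c i j. *)

Definition is_prefix (u w : list bool) : Prop := exists v, w = u ++ v.

Definition is_strict_prefix (u w : list bool) : Prop :=
  exists v, v <> [] /\ w = u ++ v.

(* The codewords form the leaf set of a full binary tree, with leaves in
   bijection with A:
   - distinct symbols have codewords none of which is a prefix of the other
     (prefix-freeness; in particular c is injective, and codewords are
     exactly the leaves of the tree of prefixes);
   - fullness: every internal node (strict prefix of some codeword) has both
     children in the tree. *)
Definition prefix_code (c : nat -> nat -> list bool) : Prop :=
  (forall i j i' j', (i, j) <> (i', j') -> ~ is_prefix (c i j) (c i' j')) /\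
  (forall (w : list bool) (b : bool),
     (exists i j, is_strict_prefix w (c i j)) ->
     exists i' j', is_prefix (w ++ [b]) (c i' j')).

Definition tdgd (q : R) (i j : nat) : R := (1 - q) ^ 2 * q ^ (i + j).

(* Partial sums of the expected length, grouped by signature s = i+j
   (terms are nonnegative, so the order of summation is irrelevant). *)
Definition partial_exp_len (q : R) (c : nat -> nat -> list bool) (n : nat) : R :=
  sum_f_R0 (fun s => sum_f_R0 (fun i => tdgd q i (s - i)%nat * INR (length (c i (s - i)%nat))) s) n.

(* exp_len q c L : the expected codeword length of c under TDGD(q) is the
   finite value L (if the series diverges, the expected length is +infinity
   and no L satisfies this). *)
Definition exp_len (q : R) (c : nat -> nat -> list bool) (L : R) : Prop :=
  Un_cv (partial_exp_len q c) L.

Definition optimal_code (q : R) (c : nat -> nat -> list bool) : Prop :=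
  prefix_code c /\
  exists L, exp_len q c L /\
    forall c' L', prefix_code c' -> exp_len q c' L' -> L <= L'.

(* Suppose two symbols of the same signature have codewords u and v ++ [b]
   with |u| < |v|.  Make v ++ [b] a sibling of u (its leaf moves up at least
   one level, u's leaf moves down one) and move the subtree rooted at the
   sibling v ++ [negb b] of the removed leaf up to v (all its leaves move up
   one level).  The result is again a full prefix code; as the two symbols
   have the same probability and the lifted subtree contains a leaf of
   positive probability, its expected length is strictly smaller. *)

From Stdlib Require Import Reals List Lra Lia Classical Wf_nat.
Import ListNotations.
Open Scope R_scope.

Definition comparable (u w : list bool) : Prop := is_prefix u w \/ is_prefix w u.

Lemma is_prefix_refl u : is_prefix u u.
Proof. exists []; now rewrite app_nil_r. Qed.

Lemma is_prefix_app u s : is_prefix u (u ++ s).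
Proof. now exists s. Qed.

Lemma is_prefix_trans u v w : is_prefix u v -> is_prefix v w -> is_prefix u w.
Proof. intros [r ->] [r' ->]. exists (r ++ r'). now rewrite app_assoc. Qed.

Lemma is_prefix_app_l u s w : is_prefix (u ++ s) w -> is_prefix u w.
Proof. apply is_prefix_trans, is_prefix_app. Qed.

Lemma is_prefix_app_cancel u s s' : is_prefix (u ++ s) (u ++ s') -> is_prefix s s'.
Proof. intros [r E]. rewrite <- app_assoc in E. apply app_inv_head in E. now exists r. Qed.

Lemma is_prefix_length u w : is_prefix u w -> (length u <= length w)%nat.
Proof. intros [r ->]. rewrite length_app. lia. Qed.

Lemma is_strict_prefix_prefix u w : is_strict_prefix u w -> is_prefix u w.
Proof. intros [r [_ E]]. now exists r. Qed.

Lemma is_strict_prefix_length u w : is_strict_prefix u w -> (length u < length w)%nat.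
Proof. intros [[|x r] [Hr ->]]; [easy|]. rewrite length_app. simpl. lia. Qed.

Lemma is_prefix_strict_snoc u w bit : is_prefix u w -> is_strict_prefix u (w ++ [bit]).
Proof. intros [r ->]. exists (r ++ [bit]). split; [now destruct r|now rewrite app_assoc]. Qed.

Lemma is_prefix_eq_or_strict u w : is_prefix u w -> u = w \/ is_strict_prefix u w.
Proof.
  intros [[|x r] ->]; [left; now rewrite app_nil_r|right].
  now exists (x :: r).
Qed.

Lemma comparable_sym u w : comparable u w -> comparable w u.
Proof. intros [H|H]; [right|left]; exact H. Qed.

Lemma is_prefix_comparable u w : is_prefix u w -> comparable u w.
Proof. now left. Qed.

Lemma common_extension_comparable u u' w :
  is_prefix u w -> is_prefix u' w -> comparable u u'.
Proof.
  revert u' w; induction u as [|x u IH]; intros u' w Hu Hu'.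
  - left. now exists u'.
  - destruct u' as [|x' u']; [right; now exists (x :: u)|].
    destruct Hu as [r ->], Hu' as [r' E]. injection E as <- E.
    destruct (IH u' (u ++ r) (is_prefix_app u r) (ex_intro _ r' E)) as [[t Et]|[t Et]];
      [left|right]; exists t; simpl; now rewrite Et.
Qed.

Lemma comparable_app_l u s w : comparable (u ++ s) w -> comparable u w.
Proof.
  intros [H|H].
  - left. exact (is_prefix_app_l u s w H).
  - exact (common_extension_comparable u w (u ++ s) (is_prefix_app u s) H).
Qed.

Lemma comparable_app_r u w s : comparable u (w ++ s) -> comparable u w.
Proof. intros H. apply comparable_sym, comparable_app_l with s, comparable_sym, H. Qed.

Lemma comparable_app_cancel u s s' : comparable (u ++ s) (u ++ s') -> comparable s s'.
Proof. intros [H|H]; [left|right]; exact (is_prefix_app_cancel _ _ _ H). Qed.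

Lemma comparable_app u s s' : comparable s s' -> comparable (u ++ s) (u ++ s').
Proof. intros [[r ->]|[r ->]]; [left|right]; exists r; now rewrite app_assoc. Qed.

Lemma comparable_length_prefix u w :
  comparable u w -> (length u <= length w)%nat -> is_prefix u w.
Proof.
  intros [H|[[|x r] ->]] Hl; [exact H| |].
  - rewrite app_nil_r. apply is_prefix_refl.
  - rewrite length_app in Hl. simpl in Hl. lia.
Qed.

Lemma is_strict_prefix_snoc u w bit : is_strict_prefix u (w ++ [bit]) -> is_prefix u w.
Proof.
  intros Hs. apply comparable_length_prefix.
  - apply common_extension_comparable with (w ++ [bit]);
      [exact (is_strict_prefix_prefix _ _ Hs)|apply is_prefix_app].
  - apply is_strict_prefix_length in Hs. rewrite length_app in Hs. simpl in Hs. lia.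
Qed.

Lemma is_prefix_snoc_truncate w bit v s :
  is_prefix (w ++ [bit]) (v ++ s) -> ~ is_prefix v w -> is_prefix (w ++ [bit]) v.
Proof.
  intros H Hvw.
  assert (Hc : comparable (w ++ [bit]) v)
    by exact (common_extension_comparable _ _ _ H (is_prefix_app v s)).
  apply comparable_length_prefix; [exact Hc|].
  destruct (Nat.le_gt_cases (length v) (length w)) as [Hl|Hl].
  - exfalso. apply Hvw, comparable_length_prefix; [|exact Hl].
    exact (comparable_sym _ _ (comparable_app_l _ _ _ Hc)).
  - rewrite length_app. simpl. lia.
Qed.

Lemma not_comparable_snoc u b : ~ comparable (u ++ [b]) (u ++ [negb b]).
Proof.
  intros H. apply comparable_app_cancel in H.
  destruct H as [[r E]|[r E]]; destruct b; discriminate.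
Qed.

Definition prefix_free {A : Type} (c : A -> list bool) : Prop :=
  forall a a', a <> a' -> ~ is_prefix (c a) (c a').

Definition full_code {A : Type} (c : A -> list bool) : Prop :=
  forall w bit, (exists a, is_strict_prefix w (c a)) ->
    exists a', is_prefix (w ++ [bit]) (c a').

Lemma prefix_code_uncurry (c : nat -> nat -> list bool) :
  prefix_code c -> prefix_free (uncurry c) /\ full_code (uncurry c).
Proof.
  intros [Hpf Hfull]. split.
  - intros [i j] [i' j']. apply Hpf.
  - intros w bit [[i j] Hw]. destruct (Hfull w bit) as [i' [j' H]]; [now exists i, j|].
    now exists (i', j').
Qed.

Lemma prefix_code_curry (C : nat * nat -> list bool) :
  prefix_free C -> full_code C -> prefix_code (curry C).
Proof.
  intros Hpf Hfull. split.
  - intros i j i' j'. apply (Hpf (i, j) (i', j')).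
  - intros w bit [i [j Hw]]. destruct (Hfull w bit) as [[i' j'] H]; [now exists (i, j)|].
    now exists i', j'.
Qed.

Lemma prefix_free_incomparable {A : Type} (c : A -> list bool) a a' :
  prefix_free c -> a <> a' -> ~ comparable (c a) (c a').
Proof. intros Hpf Hne [H|H]; [exact (Hpf _ _ Hne H)|exact (Hpf _ _ (not_eq_sym Hne) H)]. Qed.

Definition strip_prefix (u l : list bool) : option (list bool) :=
  if list_eq_dec Bool.bool_dec (firstn (length u) l) u
  then Some (skipn (length u) l) else None.

Lemma strip_prefix_spec u l :
  match strip_prefix u l with Some t => l = u ++ t | None => ~ is_prefix u l end.
Proof.
  unfold strip_prefix. destruct list_eq_dec as [E|E].
  - rewrite <- (firstn_skipn (length u) l) at 1. now rewrite E.
  - intros [r ->]. apply E. now rewrite firstn_app, firstn_all, Nat.sub_diag, app_nil_r.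
Qed.

Section Rehang.

Variables (A : Type) (eq_dec : forall a a' : A, {a = a'} + {a <> a'}).
Variables (c : A -> list bool) (x y : A) (v : list bool) (b : bool).
Hypotheses (c_prefix_free : prefix_free c) (c_full : full_code c).
Hypotheses (cy : c y = v ++ [b]) (x_short : (length (c x) < length v)%nat).

(* The leaf [y] is moved below [x], and the subtree hanging at the sibling
   [v ++ [negb b]] of [y] moves up one level to [v]. *)
Definition rehang (a : A) : list bool :=
  if eq_dec a x then c x ++ [false]
  else if eq_dec a y then c x ++ [true]
  else match strip_prefix (v ++ [negb b]) (c a) with
       | Some t => v ++ t
       | None => c a
       end.

Lemma x_v_incomparable : ~ comparable (c x) v.
Proof.
  intros [H|H].
  - apply (c_prefix_free x y); [intros <-; rewrite cy, length_app in x_short; lia|].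
    rewrite cy. exact (is_prefix_trans _ _ _ H (is_prefix_app v [b])).
  - apply is_prefix_length in H. lia.
Qed.

Lemma x_neq_y : x <> y.
Proof. intros E. apply x_v_incomparable. right. rewrite E, cy. apply is_prefix_app. Qed.

Lemma y_v_comparable : comparable (c y) v.
Proof. right. rewrite cy. apply is_prefix_app. Qed.

Lemma symbol_cases a :
  a = x \/ a = y \/ (exists t, c a = v ++ negb b :: t) \/
  (a <> x /\ ~ comparable v (c a)).
Proof.
  destruct (eq_dec a x) as [|Hx]; [now left|right].
  destruct (eq_dec a y) as [|Hy]; [now left|right].
  destruct (classic (exists t, c a = v ++ negb b :: t)) as [|Hsib]; [now left|right].
  split; [exact Hx|]. intros Hc.
  apply (prefix_free_incomparable c a y c_prefix_free Hy).
  destruct Hc as [[[|b' r] E]|H].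
  - left. rewrite E, app_nil_r, cy. apply is_prefix_app.
  - destruct (Bool.bool_dec b' b) as [<-|Hb'].
    + right. rewrite E, cy. exists r. now rewrite <- app_assoc.
    + exfalso. apply Hsib. exists r. rewrite E. now destruct b, b'.
  - left. rewrite cy. exact (is_prefix_trans _ _ _ H (is_prefix_app v [b])).
Qed.

Lemma rehang_x : rehang x = c x ++ [false].
Proof. unfold rehang. now destruct (eq_dec x x). Qed.

Lemma rehang_y : rehang y = c x ++ [true].
Proof.
  unfold rehang. destruct (eq_dec y x) as [E|_]; [now destruct x_neq_y|].
  now destruct (eq_dec y y).
Qed.

Lemma rehang_of_sibling a t : c a = v ++ negb b :: t -> rehang a = v ++ t.
Proof.
  intros Ha. unfold rehang.
  destruct (eq_dec a x) as [->|_].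
  { exfalso. apply x_v_incomparable. right. rewrite Ha. apply is_prefix_app. }
  destruct (eq_dec a y) as [->|_].
  { rewrite cy in Ha. apply app_inv_head in Ha. injection Ha. now destruct b. }
  pose proof (strip_prefix_spec (v ++ [negb b]) (c a)) as S.
  destruct (strip_prefix (v ++ [negb b]) (c a)) as [t'|].
  - rewrite Ha, <- app_assoc in S. apply app_inv_head in S. now injection S as ->.
  - exfalso. apply S. rewrite Ha. exists t. now rewrite <- app_assoc.
Qed.

Lemma rehang_other a : a <> x -> ~ comparable v (c a) -> rehang a = c a.
Proof.
  intros Hx Hv. unfold rehang.
  destruct (eq_dec a x) as [|_]; [contradiction|].
  destruct (eq_dec a y) as [->|_]; [now destruct Hv; apply comparable_sym, y_v_comparable|].
  pose proof (strip_prefix_spec (v ++ [negb b]) (c a)) as S.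
  destruct (strip_prefix (v ++ [negb b]) (c a)); [|reflexivity].
  exfalso. apply Hv. left. rewrite S, <- app_assoc. apply is_prefix_app.
Qed.

Lemma sibling_exists : exists z t, c z = v ++ negb b :: t.
Proof.
  destruct (c_full v (negb b)) as [z [t E]].
  { exists y. rewrite cy. apply is_prefix_strict_snoc, is_prefix_refl. }
  exists z, t. rewrite E. now rewrite <- app_assoc.
Qed.

Lemma rehang_incomparable a a' : a <> a' -> ~ comparable (rehang a) (rehang a').
Proof.
  intros Hne Hc.
  assert (Hx_sib : forall s t, ~ comparable (c x ++ s) (v ++ t))
    by (intros s t H; exact (x_v_incomparable (comparable_app_r _ _ t (comparable_app_l _ s _ H)))).
  assert (Hx_oth : forall s a'', a'' <> x -> ~ comparable (c x ++ s) (c a''))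
    by (intros s a'' Hx H; exact (prefix_free_incomparable c x a'' c_prefix_free
                                   (not_eq_sym Hx) (comparable_app_l _ s _ H))).
  assert (Hcode : forall a a'', a <> a'' -> ~ comparable (c a) (c a''))
    by (intros; now apply prefix_free_incomparable).
  destruct (symbol_cases a) as [->|[->|[[t Ht]|[Hx Hv]]]];
  destruct (symbol_cases a') as [->|[->|[[t' Ht']|[Hx' Hv']]]];
  rewrite ?rehang_x, ?rehang_y, ?(rehang_of_sibling _ _ Ht), ?(rehang_of_sibling _ _ Ht'),
    ?(rehang_other _ Hx Hv), ?(rehang_other _ Hx' Hv') in Hc;
  try apply Hne, eq_refl;
  try solve [ exact (not_comparable_snoc _ _ Hc) | exact (Hx_sib _ _ Hc)
            | exact (Hx_sib _ _ (comparable_sym _ _ Hc)) | exact (Hx_oth _ _ Hx' Hc)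
            | exact (Hx_oth _ _ Hx (comparable_sym _ _ Hc)) | exact (Hcode _ _ Hne Hc)
            | exact (Hv (comparable_app_l _ _ _ (comparable_sym _ _ Hc)))
            | exact (Hv' (comparable_app_l _ _ _ Hc)) ].
  apply (Hcode a a' Hne). rewrite Ht, Ht'.
  exact (comparable_app v _ _ (comparable_app [negb b] _ _ (comparable_app_cancel _ _ _ Hc))).
Qed.

Lemma rehang_prefix_free : prefix_free rehang.
Proof. intros a a' Hne H. exact (rehang_incomparable a a' Hne (is_prefix_comparable _ _ H)). Qed.

Lemma rehang_transfer w bit a :
  is_prefix (w ++ [bit]) (c a) -> ~ is_prefix v w ->
  exists a', is_prefix (w ++ [bit]) (rehang a').
Proof.
  intros H Hvw.
  destruct (symbol_cases a) as [->|[->|[[t Ht]|[Hx Hv]]]].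
  - exists x. rewrite rehang_x. exact (is_prefix_trans _ _ _ H (is_prefix_app _ _)).
  - rewrite cy in H. apply (is_prefix_snoc_truncate _ _ _ _ H) in Hvw.
    destruct sibling_exists as [z [t Hz]]. exists z. rewrite (rehang_of_sibling _ _ Hz).
    exact (is_prefix_trans _ _ _ Hvw (is_prefix_app _ _)).
  - rewrite Ht in H. apply (is_prefix_snoc_truncate _ _ _ _ H) in Hvw.
    exists a. rewrite (rehang_of_sibling _ _ Ht).
    exact (is_prefix_trans _ _ _ Hvw (is_prefix_app _ _)).
  - exists a. now rewrite (rehang_other _ Hx Hv).
Qed.

Lemma rehang_full_below_x w bit :
  is_prefix w (c x) -> exists a', is_prefix (w ++ [bit]) (rehang a').
Proof.
  intros H. destruct (is_prefix_eq_or_strict _ _ H) as [->|Hs].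
  - destruct bit; [exists y; rewrite rehang_y|exists x; rewrite rehang_x]; apply is_prefix_refl.
  - destruct (c_full w bit) as [a' Ha']; [now exists x|].
    apply (rehang_transfer _ _ _ Ha'). intros Hv.
    apply is_prefix_length in Hv. apply is_strict_prefix_length in Hs. lia.
Qed.

Lemma rehang_full : full_code rehang.
Proof.
  intros w bit [a Hs].
  destruct (symbol_cases a) as [->|[->|[[t Ht]|[Hx Hv]]]].
  - rewrite rehang_x in Hs. exact (rehang_full_below_x _ _ (is_strict_prefix_snoc _ _ _ Hs)).
  - rewrite rehang_y in Hs. exact (rehang_full_below_x _ _ (is_strict_prefix_snoc _ _ _ Hs)).
  - rewrite (rehang_of_sibling _ _ Ht) in Hs.
    destruct (classic (is_prefix v w)) as [[t1 ->]|Hvw].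
    + (* inside the moved subtree: use fullness of [c] at the old position *)
      destruct Hs as [r [Hr E]]. rewrite <- app_assoc in E. apply app_inv_head in E.
      destruct (c_full (v ++ negb b :: t1) bit) as [a' [r' Ha']].
      { exists a. rewrite Ht, E. exists r. split; [exact Hr|now rewrite <- app_assoc]. }
      exists a'. rewrite (rehang_of_sibling a' (t1 ++ bit :: r'));
        [exists r'; now rewrite <- !app_assoc|now rewrite Ha', <- !app_assoc].
    + assert (Hwv : is_prefix w v).
      { destruct (common_extension_comparable w v (v ++ t) (is_strict_prefix_prefix _ _ Hs)
                    (is_prefix_app v t)) as [H|H]; [exact H|contradiction]. }
      destruct (c_full w bit) as [a' Ha'].
      { exists y. rewrite cy. now apply is_prefix_strict_snoc. }
      exact (rehang_transfer _ _ _ Ha' Hvw).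
  - rewrite (rehang_other _ Hx Hv) in Hs.
    destruct (c_full w bit) as [a' Ha']; [now exists a|].
    apply (rehang_transfer _ _ _ Ha'). intros Hvw.
    apply Hv. left. exact (is_prefix_trans _ _ _ Hvw (is_strict_prefix_prefix _ _ Hs)).
Qed.

Lemma sibling_neq z t : c z = v ++ negb b :: t -> z <> x /\ z <> y.
Proof.
  intros Hz. split; intros ->.
  - apply x_v_incomparable. right. rewrite Hz. apply is_prefix_app.
  - rewrite cy in Hz. apply app_inv_head in Hz. injection Hz. now destruct b.
Qed.

Lemma rehang_length_x : length (rehang x) = S (length (c x)).
Proof. rewrite rehang_x, length_app, Nat.add_1_r. reflexivity. Qed.

Lemma rehang_length_y : (S (length (rehang y)) <= length (c y))%nat.
Proof. rewrite rehang_y, cy, !length_app. simpl. lia. Qed.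

Lemma rehang_length_sibling z t :
  c z = v ++ negb b :: t -> S (length (rehang z)) = length (c z).
Proof. intros Hz. rewrite (rehang_of_sibling _ _ Hz), Hz, !length_app. simpl. lia. Qed.

Lemma rehang_length_le a : a <> x -> (length (rehang a) <= length (c a))%nat.
Proof.
  intros Hx. destruct (symbol_cases a) as [->|[->|[[t Ht]|[_ Hv]]]].
  - contradiction.
  - pose proof rehang_length_y. lia.
  - rewrite <- (rehang_length_sibling _ _ Ht). lia.
  - now rewrite (rehang_other _ Hx Hv).
Qed.

End Rehang.

Lemma growing_cv_le_shift (u w : nat -> R) L e N :
  Un_growing u -> Un_growing w -> Un_cv u L ->
  (forall n, (N <= n)%nat -> w n + e <= u n) ->
  exists L', Un_cv w L' /\ L' <= L - e.
Proof.
  intros Hu Hw HL Hshift.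
  assert (Hbound : forall n, w n <= L - e).
  { intros n. pose proof (growing_prop w (Nat.max n N) n Hw (Nat.le_max_l n N)).
    pose proof (Hshift (Nat.max n N) (Nat.le_max_r n N)).
    pose proof (growing_ineq u L Hu HL (Nat.max n N)). lra. }
  destruct (growing_cv w Hw) as [L' HL']; [exists (L - e); intros r [n ->]; apply Hbound|].
  exists L'. split; [exact HL'|].
  refine (Rle_cv_lim Hbound HL' _).
  intros eps Heps. exists 0%nat. intros n _. rewrite R_dist_eq. exact Heps.
Qed.

Definition diag_sum (f : nat * nat -> R) (n : nat) : R :=
  sum_f_R0 (fun s => sum_f_R0 (fun i => f (i, s - i)%nat) s) n.

Lemma diag_sum_le f g n : (forall a, f a <= g a) -> diag_sum f n <= diag_sum g n.
Proof. intros H. apply sum_Rle; intros. apply sum_Rle; intros. apply H. Qed.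

Lemma diag_sum_plus f g n :
  diag_sum (fun a => f a + g a) n = diag_sum f n + diag_sum g n.
Proof. unfold diag_sum. rewrite <- plus_sum. apply sum_eq. intros. apply plus_sum. Qed.

Lemma diag_sum_growing f : (forall a, 0 <= f a) -> Un_growing (diag_sum f).
Proof.
  intros H n. change (diag_sum f (S n)) with
    (diag_sum f n + sum_f_R0 (fun i => f (i, S n - i)%nat) (S n)).
  assert (0 <= sum_f_R0 (fun i => f (i, S n - i)%nat) (S n)) by (apply cond_pos_sum; auto).
  lra.
Qed.

Definition point (a : nat * nat) (r : R) (a' : nat * nat) : R :=
  if ((fst a' =? fst a) && (snd a' =? snd a))%bool then r else 0.

Lemma point_eq a r : point a r a = r.
Proof. unfold point. now rewrite !Nat.eqb_refl. Qed.

Lemma point_neq a r a' : a' <> a -> point a r a' = 0.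
Proof.
  destruct a as [i j], a' as [i' j']. intros H. unfold point; simpl.
  destruct (Nat.eqb_spec i' i), (Nat.eqb_spec j' j); simpl; congruence.
Qed.

Lemma point_diagonal a r s m : (m <= s)%nat ->
  sum_f_R0 (fun i => point a r (i, s - i)%nat) m =
  if ((fst a <=? m) && (s =? fst a + snd a))%bool then r else 0.
Proof.
  destruct a as [i j]. unfold point; cbn [fst snd].
  induction m as [|m IH]; intros Hm; cbn [sum_f_R0].
  - destruct (Nat.eqb_spec 0 i), (Nat.eqb_spec (s - 0) j), (Nat.leb_spec i 0),
      (Nat.eqb_spec s (i + j)); simpl; lra || lia.
  - rewrite IH by lia.
    destruct (Nat.eqb_spec (S m) i), (Nat.eqb_spec (s - S m) j), (Nat.leb_spec i m),
      (Nat.leb_spec i (S m)), (Nat.eqb_spec s (i + j)); simpl; lra || lia.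
Qed.

Lemma diag_sum_point a r n :
  diag_sum (point a r) n = if (fst a + snd a <=? n)%nat then r else 0.
Proof.
  induction n as [|n IH].
  - transitivity (sum_f_R0 (fun i => point a r (i, 0 - i)%nat) 0); [reflexivity|].
    rewrite point_diagonal by lia.
    destruct (Nat.leb_spec (fst a) 0), (Nat.eqb_spec 0 (fst a + snd a)),
      (Nat.leb_spec (fst a + snd a) 0); simpl; lra || lia.
  - transitivity (diag_sum (point a r) n +
                  sum_f_R0 (fun i => point a r (i, S n - i)%nat) (S n)); [reflexivity|].
    rewrite IH, point_diagonal by lia.
    destruct (Nat.leb_spec (fst a) (S n)), (Nat.eqb_spec (S n) (fst a + snd a)),
      (Nat.leb_spec (fst a + snd a) n), (Nat.leb_spec (fst a + snd a) (S n)); simpl; lra || lia.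
Qed.

Section CostShift.

Variables (p : nat * nat -> R) (len len' : nat * nat -> nat) (x y z : nat * nat).
Hypotheses (p_nonneg : forall a, 0 <= p a) (p_xy : p x <= p y).
Hypotheses (x_neq_y : x <> y) (z_neq_x : z <> x) (z_neq_y : z <> y).
Hypotheses (len_x : len' x = S (len x)) (len_y : (S (len' y) <= len y)%nat)
  (len_z : (S (len' z) <= len z)%nat) (len_le : forall a, a <> x -> (len' a <= len a)%nat).

Definition cost (l : nat * nat -> nat) (a : nat * nat) : R := p a * INR (l a).

Lemma cost_pointwise a :
  cost len' a + (point x (- p x) a + point y (p x) a + point z (p z) a) <= cost len a.
Proof.
  unfold cost. pose proof (p_nonneg a) as Ha.
  destruct (classic (a = x)) as [->|Hx].
  - rewrite point_eq, !point_neq by auto. rewrite len_x, S_INR. lra.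
  - assert (Hle : INR (len' a) <= INR (len a)) by (apply le_INR, len_le, Hx).
    rewrite (point_neq x) by exact Hx.
    destruct (classic (a = y)) as [->|Hy]; [|destruct (classic (a = z)) as [->|Hz]].
    + rewrite point_eq, point_neq by auto.
      apply le_INR in len_y. rewrite S_INR in len_y. nra.
    + rewrite point_neq, point_eq by auto.
      apply le_INR in len_z. rewrite S_INR in len_z. nra.
    + rewrite !point_neq by auto. nra.
Qed.

Lemma diag_sum_cost_gap n :
  (fst x + snd x <= n)%nat -> (fst y + snd y <= n)%nat -> (fst z + snd z <= n)%nat ->
  diag_sum (cost len') n + p z <= diag_sum (cost len) n.
Proof.
  intros Hx Hy Hz.
  pose proof (diag_sum_le _ _ n cost_pointwise) as H.
  rewrite !diag_sum_plus, !diag_sum_point in H.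
  apply Nat.leb_le in Hx, Hy, Hz. rewrite Hx, Hy, Hz in H. lra.
Qed.

Lemma cost_cv_shift L :
  Un_cv (diag_sum (cost len)) L -> exists L', Un_cv (diag_sum (cost len')) L' /\ L' <= L - p z.
Proof.
  assert (Hpos : forall l a, 0 <= cost l a)
    by (intros; apply Rmult_le_pos; [apply p_nonneg|apply pos_INR]).
  intros HL.
  apply (growing_cv_le_shift (diag_sum (cost len)) _ L (p z)
           (fst x + snd x + (fst y + snd y) + (fst z + snd z)));
    [apply diag_sum_growing, Hpos|apply diag_sum_growing, Hpos|exact HL|].
  intros n Hn. apply diag_sum_cost_gap; lia.
Qed.

End CostShift.

Definition nat_pair_eq_dec (a a' : nat * nat) : {a = a'} + {a <> a'}.
Proof. decide equality; apply Nat.eq_dec. Defined.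

Lemma tdgd_pos q i j : 0 < q -> q < 1 -> 0 < tdgd q i j.
Proof. intros. unfold tdgd. apply Rmult_lt_0_compat; apply pow_lt; lra. Qed.

Lemma exp_len_improvable q c i j i' j' v b L :
  0 < q -> q < 1 -> prefix_code c -> exp_len q c L -> (i + j = i' + j')%nat ->
  c i' j' = v ++ [b] -> (length (c i j) < length v)%nat ->
  exists c' L', prefix_code c' /\ exp_len q c' L' /\ L' < L.
Proof.
  intros Hq0 Hq1 Hpc HL Hsig Hy Hx.
  destruct (prefix_code_uncurry c Hpc) as [Hpf Hfull].
  set (x := (i, j)). set (y := (i', j')).
  set (c' := rehang _ nat_pair_eq_dec (uncurry c) x y v b).
  destruct (sibling_exists _ (uncurry c) y v b Hfull Hy) as [z [t Hz]].
  destruct (sibling_neq _ (uncurry c) x y v b Hpf Hy Hx z t Hz) as [Hzx Hzy].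
  destruct (cost_cv_shift (uncurry (tdgd q)) (fun a => length (uncurry c a)) (fun a => length (c' a))
              x y z) with (L := L) as [L' [HL' HLe]].
  - intros [a1 a2]. left. apply tdgd_pos; assumption.
  - right. unfold uncurry, tdgd; simpl. now rewrite Hsig.
  - exact (x_neq_y _ (uncurry c) x y v b Hpf Hy Hx).
  - exact Hzx.
  - exact Hzy.
  - exact (rehang_length_x _ _ (uncurry c) x y v b).
  - exact (rehang_length_y _ _ (uncurry c) x y v b Hpf Hy Hx).
  - pose proof (rehang_length_sibling _ nat_pair_eq_dec _ x y v b Hpf Hy Hx z t Hz). unfold c'. lia.
  - exact (rehang_length_le _ _ (uncurry c) x y v b Hpf Hy Hx).
  -
    exact HL.
  - exists (curry c'), L'. split; [|split].
    + apply prefix_code_curry; [apply rehang_prefix_free|apply rehang_full]; assumption.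
    + exact HL'.
    + destruct z as [z1 z2]. pose proof (tdgd_pos q z1 z2 Hq0 Hq1). simpl in HLe. lra.
Qed.

Lemma optimal_code_length_gap q c i j i' j' :
  0 < q -> q < 1 -> optimal_code q c -> (i + j = i' + j')%nat ->
  (length (c i' j') <= S (length (c i j)))%nat.
Proof.
  intros Hq0 Hq1 [Hpc [L [HL Hmin]]] Hsig. apply Nat.nlt_ge. intros Hgap.
  destruct (exists_last (l := c i' j')) as [v [b Hy]];
    [intros E; rewrite E in Hgap; simpl in Hgap; lia|].
  assert (Hx : (length (c i j) < length v)%nat) by (rewrite Hy, length_app in Hgap; simpl in Hgap; lia).
  destruct (exp_len_improvable q c i j i' j' v b L Hq0 Hq1 Hpc HL Hsig Hy Hx)
    as [c' [L' [Hpc' [HL' HLt]]]].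
  pose proof (Hmin c' L' Hpc' HL'). lra.
Qed.

Lemma two_consecutive_values (P : nat -> Prop) (f : nat -> nat) :
  (exists k, P k) -> (forall k k', P k -> P k' -> (f k' <= S (f k))%nat) ->
  exists d0, forall k, P k -> f k = d0 \/ f k = S d0.
Proof.
  intros [k Hk] Hgap.
  assert (Hmin : has_unique_least_element le (fun m => exists k, P k /\ f k = m)).
  { apply dec_inh_nat_subset_has_unique_least_element; [intros m; apply classic|now exists (f k), k]. }
  destruct Hmin as [d0 [[[k0 [Hk0 <-]] Hleast] _]].
  exists (f k0). intros k' Hk'.
  pose proof (Hleast (f k') (ex_intro _ k' (conj Hk' eq_refl))). pose proof (Hgap k0 k' Hk0 Hk'). lia.
Qed.

Theorem lemma1 (q : R) (hq0 : 0 < q) (hq1 : q < 1)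
  (c : nat -> nat -> list bool) (hopt : optimal_code q c) :
  forall s : nat, exists d0 : nat,
    forall i j : nat, (i + j)%nat = s ->
      length (c i j) = d0 \/ length (c i j) = S d0.
Proof.
  intros s.
  destruct (two_consecutive_values (fun i => (i <= s)%nat) (fun i => length (c i (s - i)%nat)))
    as [d0 Hd0].
  - exists 0%nat. lia.
  - intros k k' Hk Hk'. apply (optimal_code_length_gap q); auto. lia.
  - exists d0. intros i j Hij. replace j with (s - i)%nat by lia. apply Hd0. lia.
Qed.
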